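(* For every $n\ge 8$, $k^*(n)>\lfloor (n-8)/3\rfloor$. In other words, for every $n\ge 8$ there is a pair of trees, each with at most $n$ vertices, for which every minimum $\lfloor (n-8)/3\rfloor$-isometric-universal graph is not a tree.
   Context: Graphs are finite, simple and undirected. $\mathrm{dist}_G(u,v)$ denotes the number of edges of a shortest $u$–$v$ path in $G$ ($\infty$ if none exists). For an integer $k\ge 0$, a subgraph $H$ of $G$ is $k$-isometric if, for all vertices $u,v$ of $H$, $\mathrm{dist}_H(u,v)=\mathrm{dist}_G(u,v)$ whenever $\mathrm{dist}_G(u,v)\le k$. A graph $\mathcal U$ is a $k$-isometric-universal graph for a family $\mathcal F$ of graphs if every graph of $\mathcal F$ is isomorphic to a $k$-isometric subgraph of $\mathcal U$; it is minimum if it has the smallest possible number of vertices among all such graphs, and minimal if no proper subgraph of it is $k$-isometric-universal for $\mathcal F$. $k^*(n)$ denotes the smallest value such that for every $k\ge k^*(n)$, every minimum and minimal $k$-isometric-universal graph for a pair of trees each with at most $n$ vertices is a tree. *)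

From mathcomp Require Import all_boot all_order.
Set Implicit Arguments. Unset Strict Implicit. Unset Printing Implicit Defensive.

Definition is_graph (T : finType) (e : rel T) : Prop :=
  symmetric e /\ irreflexive e.

Definition edges (T : finType) (e : rel T) : {set {set T}} :=
  [set [set x; y] | x in T, y in T & e x y].

Definition is_tree (T : finType) (e : rel T) : Prop :=
  [/\ is_graph e, 0 < #|T|, (forall x y, connect e x y)
    & #|edges e| = #|T| - 1].

Definition walk (T : finType) (e : rel T) (x y : T) (d : nat) : Prop :=
  exists p : seq T, [/\ size p = d, path e x p & last x p = y].

Definition is_dist (T : finType) (e : rel T) (x y : T) (d : nat) : Prop :=
  walk e x y d /\ forall j, walk e x y j -> d <= j.

(* G (vertex type T, adjacency eT) is isomorphic to a k-isometric subgraph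
   of U: via an injective edge-preserving map f, the image subgraph H
   (isomorphic to G through f) satisfies dist_H = dist_U on pairs at
   U-distance <= k. *)
Definition k_isometric_embeds (k : nat) (T : finType) (eT : rel T)
    (U : finType) (eU : rel U) : Prop :=
  exists f : T -> U,
    [/\ injective f,
        (forall x y, eT x y -> eU (f x) (f y))
      & forall x y d, d <= k -> is_dist eU (f x) (f y) d -> is_dist eT x y d].

Definition k_universal (k : nat) (T1 : finType) (e1 : rel T1)
    (T2 : finType) (e2 : rel T2) (U : finType) (eU : rel U) : Prop :=
  is_graph eU /\ k_isometric_embeds k e1 eU /\ k_isometric_embeds k e2 eU.

Definition k_universal_minimum (k : nat) (T1 : finType) (e1 : rel T1)
    (T2 : finType) (e2 : rel T2) (U : finType) (eU : rel U) : Prop :=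
  k_universal k e1 e2 eU /\
  forall (V : finType) (eV : rel V), k_universal k e1 e2 eV -> #|U| <= #|V|.

From mathcomp Require Import all_boot all_order.
From mathcomp Require Import zify.
Set Implicit Arguments. Unset Strict Implicit. Unset Printing Implicit Defensive.

(* Take a := k + 1 with k = (n - 8) %/ 3, the path on 3a + 1 vertices and the
   spider with three legs of length a.  Both are k-isometric subgraphs of the
   lollipop on 4a vertices (a cycle of length 3a with a pendant path), so a
   minimum universal graph has at most 4a vertices.  In a tree, root at the
   image of the spider's centre: the three legs give three vertices at every
   depth 1..a, while the depth along a path of a tree is valley-shaped and so
   takes each value at most twice.  Hence every depth 1..a has a vertex off the
   image of the path, and a tree containing both has at least 4a + 1 vertices. *)

Definition distn (m n : nat) : nat := (m - n) + (n - m).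

Lemma geq_min3 A B C X : A <= X \/ B <= X \/ C <= X -> minn A (minn B C) <= X.
Proof. by rewrite !geq_min; case=> [->|[->|->]]; rewrite ?orbT. Qed.

Lemma leq_min3_bounded T k A B C :
  (T <= A \/ k < A) -> (T <= B \/ k < B) -> (T <= C \/ k < C) ->
  minn A (minn B C) <= k -> T <= minn A (minn B C).
Proof. lia. Qed.

Lemma inord_inj n i j : inord i = inord j :> 'I_n.+1 -> i <= n -> j <= n -> i = j.
Proof. by move=> /(congr1 val) /= + le_in le_jn; rewrite !inordK. Qed.

Section Walks.
Variables (T : finType) (e : rel T).

Lemma walk0 x : walk e x x 0.
Proof. by exists [::]. Qed.

Lemma walk1 x y : e x y -> walk e x y 1.
Proof. by move=> exy; exists [:: y]; rewrite /= exy. Qed.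

Lemma walk_cat x y z d1 d2 :
  walk e x y d1 -> walk e y z d2 -> walk e x z (d1 + d2).
Proof.
move=> [p [<- ep <-]] [q [<- eq <-]]; exists (p ++ q).
by rewrite size_cat cat_path last_cat ep eq.
Qed.

Lemma walk_sym x y d : symmetric e -> walk e x y d -> walk e y x d.
Proof.
move=> e_sym [p [<- ep <-]]; elim: p x ep => [|z p IHp] x /=.
  by move=> _; exact: walk0.
case/andP=> exz /IHp; rewrite -[(size p).+1]addn1 => /walk_cat; apply.
by apply: walk1; rewrite e_sym.
Qed.

Lemma walk_map (T' : finType) (e' : rel T') (h : T -> T') x y d :
  {homo h : u v / e u v >-> e' u v} -> walk e x y d -> walk e' (h x) (h y) d.
Proof.
move=> h_hom [p [<- ep <-]]; exists (map h p); rewrite size_map last_map.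
by split=> //; elim: p x ep => [|z p IHp] x //= /andP[/h_hom -> /IHp].
Qed.

Section Along.
Variables (h : nat -> T) (n : nat).
Hypothesis h_step : forall t, t < n -> e (h t) (h t.+1).

Lemma walk_along i j : i <= j <= n -> walk e (h i) (h j) (j - i).
Proof.
case/andP=> + le_jn; elim: j le_jn => [|j IHj] lt_jn.
  by rewrite leqn0 => /eqP->; exact: walk0.
rewrite leq_eqVlt => /orP[/eqP->|le_ij]; first by rewrite subnn; exact: walk0.
rewrite subSn // -[(j - i).+1]addn1; apply: walk_cat (IHj (ltnW lt_jn) le_ij) _.
exact/walk1/h_step.
Qed.

Lemma walk_along_distn i j :
  symmetric e -> i <= n -> j <= n -> walk e (h i) (h j) (distn i j).
Proof.
move=> e_sym le_in le_jn; rewrite /distn; have [le_ij|lt_ji] := leqP i j.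
  by rewrite (eqP le_ij) add0n; apply: walk_along; rewrite le_ij.
rewrite (eqP (ltnW lt_ji)) addn0; apply: walk_sym e_sym _.
by apply: walk_along; rewrite (ltnW lt_ji).
Qed.

End Along.
End Walks.

Lemma isometric_embeds_of_walk_bound k (T U : finType) (eT : rel T) (eU : rel U)
    (h : T -> U) (lb : U -> U -> nat) :
  injective h -> {homo h : x y / eT x y >-> eU x y} ->
  (forall u v d, walk eU u v d -> lb u v <= d) ->
  (forall x y, lb (h x) (h y) <= k -> exists2 j, j <= lb (h x) (h y) & walk eT x y j) ->
  k_isometric_embeds k eT eU.
Proof.
move=> h_inj h_hom lb_walk lb_short; exists h; split=> // x y d le_dk [wd d_min].
have lb_d := lb_walk _ _ _ wd.
have [j le_j_lb wj] := lb_short x y (leq_trans lb_d le_dk).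
have {le_j_lb}le_jd := leq_trans le_j_lb lb_d.
have -> : d = j by apply/eqP; rewrite eqn_leq le_jd (d_min _ (walk_map h_hom wj)).
by split=> // j' /(walk_map h_hom)/d_min/(leq_trans le_jd).
Qed.

Definition parent_rel (T : finType) (r : T) (p : T -> T) : rel T :=
  fun x y => (x != r) && (p x == y) || (y != r) && (p y == x).

Section ParentTree.
Variables (T : finType) (r : T) (p : T -> T) (rk : T -> nat).
Hypothesis rk_p : forall x, x != r -> rk (p x) < rk x.

Lemma parent_edge_inj : {in [set~ r] &, injective (fun x => [set x; p x])}.
Proof.
move=> x y; rewrite !inE => xr yr Exy.
have /set2P[//|Ex]: x \in [set y; p y] by rewrite -Exy set21.
have /set2P[//|Ey]: y \in [set x; p x] by rewrite Exy set21.
by have := rk_p xr; have := rk_p yr; rewrite -Ex -Ey; lia.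
Qed.

Lemma parent_rel_sym : symmetric (parent_rel r p).
Proof. by move=> x y; rewrite /parent_rel orbC. Qed.

Lemma connect_parent_root x : connect (parent_rel r p) x r.
Proof.
elim: {x}(rk x) {-2}x (leqnn (rk x)) => [|m IHm] x le_x;
  have [->|xr] := eqVneq x r; try exact: connect0.
  by have := rk_p xr; rewrite ltnNge (leq_trans le_x).
apply: (@connect_trans _ _ (p x)); first by apply: connect1; rewrite /parent_rel xr eqxx.
by apply: IHm; have := rk_p xr; lia.
Qed.

Lemma edges_parent_rel : edges (parent_rel r p) = [set [set x; p x] | x in [set~ r]].
Proof.
apply/setP=> s; apply/imset2P/imsetP=> [[x y _]|[x]]; rewrite !inE.
  case/orP=> /andP[nr /eqP <-] ->; first by exists x; rewrite ?inE.
  by exists y; rewrite ?inE // setUC.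
by move=> xr ->; exists x (p x); rewrite // inE /parent_rel xr eqxx.
Qed.

Lemma parent_rel_tree : is_tree (parent_rel r p).
Proof.
split.
- split; first exact: parent_rel_sym.
  move=> x; rewrite /parent_rel orbb; apply/andP=> -[xr /eqP px].
  by have := rk_p xr; rewrite px ltnn.
- by apply/card_gt0P; exists r.
- move=> x y; apply: connect_trans (connect_parent_root x) _.
  by rewrite (sym_connect_sym parent_rel_sym) connect_parent_root.
- by rewrite edges_parent_rel card_in_imset ?cardsC1 ?subn1 //; exact: parent_edge_inj.
Qed.

End ParentTree.

Section Depth.
Variables (U : finType) (eU : rel U).
Hypothesis U_tree : is_tree eU.
Variable r : U.

Definition root_walkb j v := [exists p : j.-tuple U, path eU r p && (last r p == v)].

Lemma root_walkb_path (p : seq U) : path eU r p -> root_walkb (size p) (last r p).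
Proof. by move=> rp; apply/existsP; exists (in_tuple p); rewrite rp eqxx. Qed.

Lemma root_walkbE j v :
  root_walkb j v -> exists2 p : seq U, size p = j & path eU r p && (last r p == v).
Proof. by case/existsP=> p pv; exists p; rewrite ?size_tuple. Qed.

Lemma exists_root_walkb v : exists j, root_walkb j v.
Proof.
case: U_tree => _ _ /(_ r v) /connectP[p rp ->].
by exists (size p); exact: root_walkb_path.
Qed.

Definition depth v := ex_minn (exists_root_walkb v).

Lemma depth_root_walkb v : root_walkb (depth v) v.
Proof. by rewrite /depth; case: ex_minnP. Qed.

Lemma depth_min v j : root_walkb j v -> depth v <= j.
Proof. by rewrite /depth; case: ex_minnP => m _; apply. Qed.

Lemma depth_root : depth r = 0.
Proof. by apply/eqP; rewrite -leqn0 (@depth_min r 0) // (root_walkb_path (p:=[::])). Qed.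

Lemma depth_edge u v : eU u v -> depth v <= (depth u).+1.
Proof.
move=> euv; have [p <- /andP[rp /eqP pu]] := root_walkbE (depth_root_walkb u).
have := root_walkb_path (p := rcons p v).
by rewrite size_rcons last_rcons rcons_path rp pu euv => /(_ isT)/depth_min.
Qed.

Definition parent v := odflt r [pick w | eU w v && ((depth w).+1 == depth v)].

Lemma parent_spec v : v != r -> eU (parent v) v /\ (depth (parent v)).+1 = depth v.
Proof.
move=> vr; rewrite /parent; case: pickP => [w /andP[ewv /eqP] //|no_parent].
have [p sp /andP[rp /eqP pv]] := root_walkbE (depth_root_walkb v).
case/lastP: p sp rp pv => [|q w] sp rp pv; first by rewrite -pv eqxx in vr.
rewrite last_rcons in pv; subst w; rewrite rcons_path in rp; case/andP: rp => rq ev.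
have := no_parent (last r q); rewrite ev /= => /eqP[].
have := depth_min (root_walkb_path rq); have := depth_edge ev; rewrite size_rcons in sp.
by rewrite -sp; lia.
Qed.

Lemma parent_root : parent r = r.
Proof.
by rewrite /parent; case: pickP => // w /andP[_]; rewrite depth_root.
Qed.

Lemma tree_edges_parent : [set [set w; parent w] | w in [set~ r]] = edges eU.
Proof.
have [[e_sym _] _ _ card_edges] := U_tree; apply/eqP; rewrite eqEcard.
rewrite card_in_imset ?cardsC1 ?card_edges ?subn1 ?leqnn ?andbT; last first.
  by apply: (parent_edge_inj (rk := depth)) => w /parent_spec[_ <-].
apply/subsetP=> s /imsetP[w]; rewrite !inE => wr ->.
by apply/imset2P; exists w (parent w); rewrite // inE e_sym; case: (parent_spec wr).
Qed.

Lemma tree_edgeP u v : eU u v ->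
  (parent u = v /\ depth u = (depth v).+1) \/ (parent v = u /\ depth v = (depth u).+1).
Proof.
have [[_ e_irr] _ _ _] := U_tree; move=> euv.
have : [set u; v] \in edges eU by apply/imset2P; exists u v; rewrite ?inE.
rewrite -tree_edges_parent => /imsetP[w]; rewrite !inE => wr Euv.
have [_ dw] := parent_spec wr.
have /set2P[Eu|Eu]: u \in [set w; parent w] by rewrite -Euv set21.
all: have /set2P[Ev|Ev]: v \in [set w; parent w] by rewrite -Euv set22.
all: rewrite Eu Ev in euv *; by [rewrite e_irr in euv | left | right].
Qed.

Lemma parent_of_shallower u v : eU u v -> depth v <= depth u -> parent u = v.
Proof. by case/tree_edgeP=> [[-> _]|[_ ->]]; rewrite ?ltnn. Qed.

End Depth.

Lemma nat_argmax (D : nat -> nat) lo hi : lo < hi ->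
  exists2 t, lo <= t < hi & forall s, lo <= s < hi -> D s <= D t.
Proof.
elim: hi => [//|hi IHhi] lt_lo_hi; have [<-|ne_lo_hi] := eqVneq lo hi.
  by exists lo => [|s s_in]; [lia | have -> : s = lo by lia].
have [t t_in t_max] := IHhi (ltac:(lia)).
have [le_hi_t|lt_t_hi] := leqP (D hi) (D t).
  exists t => [|s s_in]; first lia.
  by have [->|ne_s] := eqVneq s hi; last by apply: t_max; lia.
exists hi => [|s s_in]; first lia.
by have [->|ne_s] := eqVneq s hi; last by have := t_max s (ltac:(lia)); lia.
Qed.

Section TreeWalk.
Variables (U : finType) (eU : rel U).
Hypothesis U_tree : is_tree eU.
Variables (r : U) (h : nat -> U) (n : nat).
Hypothesis h_inj : {in [pred i | i <= n] &, injective h}.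
Hypothesis h_step : forall t, t < n -> eU (h t) (h t.+1).

Local Notation depth := (depth U_tree r).
Local Notation parent := (parent U_tree r).

Lemma depth_walk_from_root : h 0 = r -> forall t, t <= n -> depth (h t) = t.
Proof.
move=> h0 t le_tn; suff [] : depth (h t) = t /\ parent (h t) = h t.-1 by [].
elim: t le_tn => [|t IHt] lt_tn; first by rewrite h0 depth_root parent_root.
have [dt pt] := IHt (ltnW lt_tn).
case: (tree_edgeP U_tree r (h_step lt_tn)) => [[pt' _]|[-> ->]]; last by rewrite dt.
suff: t.-1 = t.+1 by lia.
by apply: h_inj; rewrite ?inE -?pt -?pt' //; lia.
Qed.

Lemma depth_walk_valley i j k : i < j -> j < k -> k <= n ->
  depth (h j) < maxn (depth (h i)) (depth (h k)).
Proof.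
move=> lt_ij lt_jk le_kn; rewrite ltnNge geq_max; apply/negP=> /andP[le_ij le_kj].
have [t t_in t_max] := nat_argmax (fun s => depth (h s)) (ltac:(lia) : i.+1 < k).
have shallow s : i <= s <= k -> depth (h s) <= depth (h t).
  move=> s_in; have [->|ne_si] := eqVneq s i; first by apply: leq_trans le_ij (t_max _ _); lia.
  have [->|ne_sk] := eqVneq s k; first by apply: leq_trans le_kj (t_max _ _); lia.
  by apply: t_max; lia.
have e_sym : symmetric eU by case: U_tree => -[].
(* Both neighbours of the interior maximum t are at most as deep, hence both are
   its parent. *)
have ep : parent (h t) = h t.-1.
  apply: parent_of_shallower; last by apply: shallow; lia.
  have t_pos : 0 < t by lia.
  by rewrite e_sym; have := @h_step t.-1; rewrite prednK //; apply; lia.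
have es : parent (h t) = h t.+1.
  by apply: parent_of_shallower; [apply: h_step | apply: shallow]; lia.
suff: t.-1 = t.+1 by lia.
by apply: h_inj; rewrite ?inE -?ep -?es //; lia.
Qed.

Lemma depth_walk_no_triple i j k : i <= n -> j <= n -> k <= n ->
  i != j -> j != k -> i != k ->
  depth (h i) = depth (h j) -> depth (h j) = depth (h k) -> False.
Proof.
move=> le_i le_j le_k ne_ij ne_jk ne_ik dij djk.
have valley x y z : x < y /\ y < z /\ z <= n ->
    depth (h y) < maxn (depth (h x)) (depth (h z)).
  by case=> ? [? ?]; exact: depth_walk_valley.
have : (i < j /\ j < k /\ k <= n) \/ (k < j /\ j < i /\ i <= n) \/
       (j < i /\ i < k /\ k <= n) \/ (k < i /\ i < j /\ j <= n) \/
       (i < k /\ k < j /\ j <= n) \/ (j < k /\ k < i /\ i <= n) by lia.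
by case=> [/valley|[/valley|[/valley|[/valley|[/valley|/valley]]]]]; lia.
Qed.

End TreeWalk.

Section Lollipop.
Variable a : nat.

(* The vertices 0..a form a tail and a..4a-1 a cycle of length 3a, closed by
   the edge {a, 4a-1}. *)
Definition lollipop_adj (u v : nat) : bool :=
  [|| u.+1 == v, v.+1 == u, (u == a) && (v == (4 * a).-1) | (v == a) && (u == (4 * a).-1)].

Definition lollipop : rel 'I_(4 * a) := fun u v => lollipop_adj u v.

Lemma lollipop_adjC u v : lollipop_adj u v = lollipop_adj v u.
Proof. by rewrite /lollipop_adj orbCA; congr (_ || (_ || _)); exact: orbC. Qed.

Lemma lollipop_graph : 0 < a -> is_graph lollipop.
Proof.
move=> a_gt0; split=> [u v|u]; first exact: lollipop_adjC.
rewrite /lollipop /lollipop_adj.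
rewrite (gtn_eqF (ltnSn u)) /= orbb; apply/negbTE/negP=> /andP[/eqP-> /eqP]; lia.
Qed.

(* The shortest of the three routes: straight along 0..4a-1, or through the
   closing edge in either direction. *)
Definition lollipop_dist (u v : nat) : nat :=
  minn (distn u v)
    (minn (distn u a + distn v (4 * a).-1).+1 (distn u (4 * a).-1 + distn v a).+1).

Lemma lollipop_dist_step u v w :
  lollipop_adj v w -> lollipop_dist u w <= (lollipop_dist u v).+1.
Proof.
rewrite -[(lollipop_dist u v).+1]addn1 /lollipop_dist !addn_minl !leq_min !addn1.
case/or4P=> [/eqP<-|/eqP<-|/andP[/eqP-> /eqP->]|/andP[/eqP-> /eqP->]];
  rewrite /distn; apply/and3P; split; apply: geq_min3;
  first [left; lia | right; left; lia | right; right; lia].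
Qed.

Lemma lollipop_dist_walk (u v : 'I_(4 * a)) d :
  walk lollipop u v d -> lollipop_dist u v <= d.
Proof.
case=> p [<- up <-]; elim/last_ind: p up => [|p w IHp].
  by rewrite /lollipop_dist /distn subnn min0n.
rewrite rcons_path last_rcons size_rcons => /andP[/IHp lb_p /(lollipop_dist_step u) step].
by apply: leq_trans step _; rewrite ltnS.
Qed.

End Lollipop.
Arguments lollipop : clear implicits.

Section PathGraph.
Variable n : nat.

Definition path_graph : rel 'I_n.+1 := parent_rel ord0 (fun i => inord i.-1).

Lemma path_graph_tree : is_tree path_graph.
Proof.
apply: (parent_rel_tree (rk := @nat_of_ord _)) => i.
rewrite -val_eqE /= -lt0n => i_gt0; rewrite inordK; have := ltn_ord i; lia.
Qed.

Lemma path_graph_step t : t < n -> path_graph (inord t) (inord t.+1).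
Proof.
move=> lt_tn; apply/orP; right; rewrite -!val_eqE /= !inordK //; lia.
Qed.

Lemma path_graph_walk (i j : 'I_n.+1) : walk path_graph i j (distn i j).
Proof.
have := walk_along_distn path_graph_step (parent_rel_sym _ _) (leq_ord i) (leq_ord j).
by rewrite !inord_val.
Qed.

End PathGraph.
Arguments path_graph : clear implicits.

Section Spider.
Variable a : nat.

Definition leg_start (i : nat) : bool := [|| i == 1, i == a.+1 | i == (2 * a).+1].

Definition spider : rel 'I_(3 * a).+1 :=
  parent_rel ord0 (fun i => if leg_start i then ord0 else inord i.-1).

Lemma spider_tree : is_tree spider.
Proof.
apply: (parent_rel_tree (rk := @nat_of_ord _)) => i.
rewrite -val_eqE /= -lt0n => i_gt0; case: ifP => //= _.
rewrite inordK; have := ltn_ord i; lia.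
Qed.

(* The legs are 1..a, a+1..2a and 2a+1..3a; leg l s is the vertex at distance
   s from the centre 0 on leg l < 3. *)
Definition leg (l s : nat) : nat := if s is 0 then 0 else l * a + s.

Lemma legE l s : 0 < s -> leg l s = l * a + s.
Proof. by case: s. Qed.

Lemma leg_inj l : injective (leg l).
Proof. by case=> [|s] [|s'] /=; lia. Qed.

Lemma leg_eq_leg l l' s : leg l s = leg l' s -> l < 3 -> l' < 3 -> 0 < s <= a -> l = l'.
Proof.
move=> + lt_l3 lt_l'3 /andP[s_gt0 le_sa]; rewrite !legE //.
by case: l lt_l3 => [|[|[|]]] //; case: l' lt_l'3 => [|[|[|]]] //= _ _; lia.
Qed.

Lemma leg_le l s : l < 3 -> s <= a -> leg l s <= 3 * a.
Proof. by case: s => // s; case: l => [|[|[|]]] //=; lia. Qed.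

Lemma leg_startE l s : l < 3 -> s < a -> leg_start (leg l s.+1) = (s == 0).
Proof. by rewrite /leg_start /=; case: l => [|[|[|]]] //=; lia. Qed.

Lemma spider_step l s : l < 3 -> s < a -> spider (inord (leg l s)) (inord (leg l s.+1)).
Proof.
move=> lt_l3 lt_sa; have leg_s := leg_le lt_l3 (ltnW lt_sa).
have leg_s1 := leg_le lt_l3 lt_sa; apply/orP; right; rewrite -!val_eqE /= !inordK // leg_startE //.
case: s lt_sa leg_s {leg_s1} => [|s] lt_sa leg_s /=; first by rewrite addn1.
by rewrite /= in leg_s; rewrite inordK /=; lia.
Qed.

Lemma spider_walk_leg l s s' : l < 3 -> s <= a -> s' <= a ->
  walk spider (inord (leg l s)) (inord (leg l s')) (distn s s').
Proof.
move=> lt_l3; apply: (walk_along_distn (h := fun s => inord (leg l s))).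
  by move=> t; exact: spider_step.
exact: parent_rel_sym.
Qed.

Lemma spider_walk_center l l' s s' : l < 3 -> l' < 3 -> s <= a -> s' <= a ->
  walk spider (inord (leg l s)) (inord (leg l' s')) (s + s').
Proof.
move=> lt_l3 lt_l'3 le_sa le_s'a.
have := walk_cat (spider_walk_leg lt_l3 le_sa (leq0n a)) (spider_walk_leg lt_l'3 (leq0n a) le_s'a).
by rewrite /distn !subn0 !sub0n addn0.
Qed.

Lemma spider_vertexP (i : 'I_(3 * a).+1) :
  exists l s, [/\ l < 3, s <= a, 0 < s \/ l = 0 & i = inord (leg l s)].
Proof.
have le_i := leq_ord i; rewrite -[i]inord_val.
have [le_ia|lt_ai] := leqP i a.
  by exists 0, i; split=> //; [right | congr inord; case: (nat_of_ord i)].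
have [le_i2a|lt_2ai] := leqP i (2 * a).
  exists 1, (i - a); split=> //; try lia.
  by rewrite legE; [congr inord; lia | lia].
exists 2, (i - 2 * a); split=> //; try lia.
by rewrite legE; [congr inord; lia | lia].
Qed.

End Spider.
Arguments spider : clear implicits.

Section LollipopUniversal.
Variable a : nat.
Hypothesis a_gt0 : 0 < a.

Lemma path_size_le : (3 * a).+1 <= 4 * a.
Proof. lia. Qed.

Definition path_in_lollipop : 'I_(3 * a).+1 -> 'I_(4 * a) := widen_ord path_size_le.

Lemma path_isometric : k_isometric_embeds a.-1 (path_graph (3 * a)) (lollipop a).
Proof.
apply: (isometric_embeds_of_walk_bound (h := path_in_lollipop)
          (lb := fun u v => lollipop_dist a u v)).
- by move=> i j [] /val_inj.
- move=> i j /orP[]/andP[]; rewrite -val_eqE /= => nz /eqP <-;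
    rewrite /lollipop /lollipop_adj /= inordK ?(leq_ltn_trans (leq_pred _) (ltn_ord _)) //;
    by rewrite prednK ?lt0n // eqxx ?orbT.
- exact: lollipop_dist_walk.
move=> i j /= lb_small; exists (distn i j); last exact: path_graph_walk.
have le_i := leq_ord i; have le_j := leq_ord j.
by move: lb_small; rewrite /lollipop_dist; apply: leq_min3_bounded; rewrite /distn; lia.
Qed.

(* The centre goes to a; leg 0 runs down the tail and legs 1 and 2 run round
   the cycle in opposite directions. *)
Definition spider_pos (i : nat) : nat :=
  if i <= a then a - i else if i <= 2 * a then i else 6 * a - i.

Lemma spider_pos_lt (i : 'I_(3 * a).+1) : spider_pos i < 4 * a.
Proof. have := leq_ord i; rewrite /spider_pos; do ![case: ifP]; lia. Qed.

Definition spider_in_lollipop (i : 'I_(3 * a).+1) : 'I_(4 * a) := Ordinal (spider_pos_lt i).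

Lemma spider_pos_inj i j : i <= 3 * a -> j <= 3 * a -> spider_pos i = spider_pos j -> i = j.
Proof. rewrite /spider_pos; do ![case: ifP]; lia. Qed.

Lemma spider_pos_parent i : 0 < i <= 3 * a ->
  lollipop_adj a (spider_pos i) (spider_pos (if leg_start a i then 0 else i.-1)).
Proof. rewrite /spider_pos /leg_start /lollipop_adj; do ![case: ifP]; lia. Qed.

Lemma spider_pos_leg l s : l < 3 -> s <= a -> (0 < s \/ l = 0) ->
  spider_pos (leg a l s) = nth 0 [:: a - s; a + s; 4 * a - s] l.
Proof.
case: l => [|[|[|//]]] _; case: s => [|s] /= le_sa alt;
  rewrite /spider_pos ?leq0n; do ?[case: ifP]; lia.
Qed.

Lemma spider_isometric : k_isometric_embeds a.-1 (spider a) (lollipop a).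
Proof.
apply: (isometric_embeds_of_walk_bound (h := spider_in_lollipop)
          (lb := fun u v => lollipop_dist a u v)).
- by move=> i j [] /spider_pos_inj => /(_ (leq_ord i) (leq_ord j)) /val_inj.
- have parent_adj (i : 'I_(3 * a).+1) : i != ord0 ->
      lollipop a (spider_in_lollipop i)
        (spider_in_lollipop (if leg_start a i then ord0 else inord i.-1)).
    rewrite -val_eqE /= -lt0n => i_gt0; rewrite /lollipop /= (fun_if (@nat_of_ord _)) /=.
    rewrite inordK ?(leq_ltn_trans (leq_pred _) (ltn_ord _)) //.
    by apply: spider_pos_parent; rewrite i_gt0 leq_ord.
  move=> i j /orP[]/andP[i0 /eqP <-]; last rewrite /lollipop lollipop_adjC; exact: parent_adj.
- exact: lollipop_dist_walk.
move=> x y.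
have [l [s [lt_l3 le_sa s_alt ->]]] := spider_vertexP x.
have [l' [s' [lt_l'3 le_s'a s'_alt ->]]] := spider_vertexP y.
rewrite /= !inordK ?ltnS ?leg_le // !spider_pos_leg // /lollipop_dist => lb_small.
exists (if l == l' then distn s s' else s + s'); last first.
  by case: eqP => [<-|_]; [exact: spider_walk_leg | exact: spider_walk_center].
move: lb_small; case: l lt_l3 s_alt => [|[|[|]]] //.
all: case: l' lt_l'3 s'_alt => [|[|[|]]] //= _ ? _ ?.
all: by apply: leq_min3_bounded; rewrite /distn; lia.
Qed.

Lemma lollipop_universal :
  k_universal a.-1 (path_graph (3 * a)) (spider a) (lollipop a).
Proof.
by split; [exact: lollipop_graph | split; [exact: path_isometric | exact: spider_isometric]].
Qed.

End LollipopUniversal.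

Section TreeHostingPathAndSpider.
Variables (a : nat) (U : finType) (eU : rel U).
Hypothesis U_tree : is_tree eU.
Variables (f g : 'I_(3 * a).+1 -> U).
Hypotheses (f_inj : injective f) (g_inj : injective g).
Hypothesis f_hom : {homo f : x y / path_graph (3 * a) x y >-> eU x y}.
Hypothesis g_hom : {homo g : x y / spider a x y >-> eU x y}.

Local Notation depth := (depth U_tree (g ord0)).

Lemma depth_spider_leg l s : l < 3 -> s <= a -> depth (g (inord (leg a l s))) = s.
Proof.
move=> lt_l3 le_sa.
apply: (@depth_walk_from_root _ _ U_tree _ (fun s => g (inord (leg a l s))) a) => //.
- move=> t t' le_t le_t' /g_inj /inord_inj E; apply: (@leg_inj a l).
  by apply: E; apply: leg_le.
- by move=> t lt_ta; apply/g_hom/spider_step.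
- by congr g; apply: val_inj; rewrite /= inordK.
Qed.

Lemma depth_path_no_triple (x y z : 'I_(3 * a).+1) : x != y -> y != z -> x != z ->
  depth (f x) = depth (f y) -> depth (f y) = depth (f z) -> False.
Proof.
move=> ne_xy ne_yz ne_xz; rewrite -[x]inord_val -[y]inord_val -[z]inord_val.
apply: (@depth_walk_no_triple _ _ U_tree _ (fun i => f (inord i)) (3 * a)); rewrite ?leq_ord //.
- by move=> i j le_i le_j /f_inj /inord_inj; apply.
- by move=> t lt_t; apply/f_hom/path_graph_step.
Qed.

Lemma off_path_at_depth t : 0 < t <= a ->
  exists2 v, v \notin f @: 'I_(3 * a).+1 & depth v = t.
Proof.
move=> /andP[t_gt0 le_ta]; set P := f @: _; pose v l := g (inord (leg a l t)).
have depth_v l : l < 3 -> depth (v l) = t by move=> lt_l3; exact: depth_spider_leg.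
have preimages_differ l l' x x' : l < 3 -> l' < 3 -> l != l' ->
    v l = f x -> v l' = f x' -> x != x'.
  move=> lt_l3 lt_l'3 ne_ll' vx vx'; apply: contra ne_ll' => /eqP xx'.
  move: vx'; rewrite -xx' -vx => /g_inj/inord_inj; rewrite !leg_le // => /(_ isT isT).
  by move/leg_eq_leg => /(_ lt_l'3 lt_l3); rewrite t_gt0 le_ta => /(_ isT) ->.
suff [l lt_l3 vl_off] : exists2 l, l < 3 & v l \notin P.
  by exists (v l); rewrite ?depth_v.
case: (boolP (v 0 \in P)) => [/imsetP[x0 _ v0]|]; last by exists 0.
case: (boolP (v 1 \in P)) => [/imsetP[x1 _ v1]|]; last by exists 1.
case: (boolP (v 2 \in P)) => [/imsetP[x2 _ v2]|]; last by exists 2.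
exfalso; apply: (@depth_path_no_triple x0 x1 x2); rewrite -?v0 -?v1 -?v2 ?depth_v //.
- exact: preimages_differ 0 1 x0 x1 isT isT isT v0 v1.
- exact: preimages_differ 1 2 x1 x2 isT isT isT v1 v2.
- exact: preimages_differ 0 2 x0 x2 isT isT isT v0 v2.
Qed.

Lemma host_tree_card_gt : 4 * a < #|U|.
Proof.
have [psi psi_off psi_depth] :=
  fin_all_exists2 (fun t : 'I_a => @off_path_at_depth t.+1 (ltn_ord t)).
have psi_inj : injective psi.
  by move=> t t' /(congr1 depth); rewrite !psi_depth => -[] /val_inj.
have disjoint_images : f @: 'I_(3 * a).+1 :&: psi @: 'I_a = set0.
  apply/setP=> v; rewrite !inE; apply/negP=> /andP[vP /imsetP[t _ vE]].
  by move: (psi_off t); rewrite -vE vP.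
have := max_card (f @: 'I_(3 * a).+1 :|: psi @: 'I_a).
by rewrite cardsU disjoint_images cards0 !card_imset // !card_ord; lia.
Qed.

End TreeHostingPathAndSpider.

Theorem theorem7 : forall n : nat, 8 <= n ->
  exists (T1 : finType) (e1 : rel T1) (T2 : finType) (e2 : rel T2),
    [/\ is_tree e1, #|T1| <= n, is_tree e2, #|T2| <= n &
      forall (U : finType) (eU : rel U),
        k_universal_minimum ((n - 8) %/ 3) e1 e2 eU -> ~ is_tree eU].
Proof.
move=> n n_ge8; pose a := ((n - 8) %/ 3).+1.
have a_gt0 : 0 < a by [].
have card_le : #|'I_(3 * a).+1| <= n by rewrite card_ord /a; lia.
exists _, (path_graph (3 * a)), _, (spider a).
split=> //; [exact: path_graph_tree | exact: spider_tree |].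
move=> U eU [[_ [[f [f_inj f_hom _]] [g [g_inj g_hom _]]]] U_min] U_tree.
have := U_min _ _ (lollipop_universal a_gt0); rewrite card_ord.
by have := host_tree_card_gt U_tree f_inj g_inj f_hom g_hom; lia.
Qed.
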